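(* For every $b>0$ and $0\le\delta<1$ there exists a univariate polynomial $s_{b,\delta}$ of degree $\lceil\sqrt{2\theta\log(4/\delta)}\rceil$, where $\theta=\lceil\max\{\tfrac12be^2,\log(2/\delta)\}\rceil$, such that \[ |\exp(-2t)-s_{b,\delta}^2(t)|\le2\delta+\delta^2\le3\delta\qquad\forall t\in[0,b]. \]
   Context: $\log$ is the natural logarithm and $e$ is Euler's number. *)

From HB Require Import structures.
From mathcomp Require Import all_boot all_order all_algebra.
From mathcomp Require Import all_classical all_reals all_analysis.
Set Implicit Arguments. Unset Strict Implicit. Unset Printing Implicit Defensive.
Import Order.TTheory GRing.Theory Num.Theory.
Local Open Scope ring_scope.

Definition theta (R : realType) (b delta : R) : R :=
  (Num.ceil (Num.max (b * expR 1 ^+ 2 / 2) (ln (2 / delta))))%:~R.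

Definition sdeg (R : realType) (b delta : R) : nat :=
  `|Num.ceil (Num.sqrt (2 * theta b delta * ln (4 / delta)))|%N.

From HB Require Import structures.
From mathcomp Require Import all_boot all_order all_algebra.
From mathcomp Require Import all_classical all_reals all_analysis.
From mathcomp Require Import ring lra zify.
Import Order.TTheory GRing.Theory Num.Theory numFieldNormedType.Exports.

Set Implicit Arguments.
Unset Strict Implicit.
Unset Printing Implicit Defensive.

Local Open Scope classical_set_scope.
Local Open Scope ring_scope.

(* Put lam := b/2 and x := 1 - 2t/b in [-1, 1], so exp(-t) = exp(-lam) exp(lam x).
   Truncating the Taylor series of exp(lam x) after N + 1 terms costs at most
   lam^(N+1)/(N+1)! <= exp(-N-2) <= delta/8 once lam e^2 <= N and
   exp(-N) <= delta/2.  Each remaining monomial is an average of Chebyshev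
   polynomials: x^i = E[T_|S_i|(x)] for the simple random walk S on the
   integers, because T_(k+1) + T_(k-1) = 2x T_k.  Dropping the terms with
   |S_i| > d leaves a polynomial of degree d, and as |T_k| <= 1 on [-1, 1] the
   error is at most P(|S_i| > d) <= 2 exp(-d^2/2i) <= delta/2 (Chernoff, using
   cosh mu <= exp(mu^2/2)).  So exp(-t) is approximated within 5 delta/8 on
   [0, b] by a polynomial of degree d; a small multiple of X^d makes the degree
   exact, and as 0 <= exp(-t) <= 1, squaring turns the error delta into
   2 delta + delta^2. *)

Lemma leq_mul_fact m n : (m`! * n`! <= (m + n)`!)%N.
Proof.
by rewrite -(bin_fact (leq_addr n m)) addKn leq_pmull // bin_gt0 leq_addr.
Qed.

Lemma leq_exp2_fact_double k : (2 ^ k * k`! <= k.*2`!)%N.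
Proof.
elim: k => [|k IHk] //; rewrite doubleS !factS expnS.
move: IHk; set A := (2 ^ k)%N; set B := k`!; set C := (k.*2)`!.
rewrite -!mul2n; nia.
Qed.

Section ExpPolyApprox.
Context {R : realType}.

Lemma expR_partial_sum_le (x : R) n : 0 <= x ->
  \sum_(0 <= i < n) x ^+ i / i`!%:R <= expR x.
Proof.
move=> x_ge0; apply: (nondecreasing_cvgn_le _ (is_cvg_series_exp_coeff x)).
apply: nondecreasing_series => i _ _.
by rewrite /exp_coeff /= divr_ge0 // exprn_ge0.
Qed.

Lemma expR_taylor_err (y : R) n :
  `|expR y - \sum_(0 <= i < n) y ^+ i / i`!%:R| <= `|y| ^+ n / n`!%:R * expR `|y|.
Proof.
set a := \sum_(0 <= i < n) _.
have cv : (fun m => `|series (exp_coeff y) m - a|) @ \oo --> `|expR y - a|.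
  apply: cvg_norm; apply: cvgB; last exact: cvg_cst.
  exact: is_cvg_series_exp_coeff.
rewrite -(cvg_lim _ cv) //; apply: limr_le; first by apply/cvg_ex; exists `|expR y - a|.
near=> m; have nm : (n <= m)%N by near: m; exists n.
rewrite /series /= /a (big_cat_nat _ nm) //= addrAC subrr add0r -{1}(add0n n) big_addn.
apply: le_trans (ler_norm_sum _ _ _) _.
have yn_ge0 : 0 <= `|y| ^+ n / n`!%:R by rewrite divr_ge0 ?exprn_ge0.
apply: le_trans (ler_wpM2l yn_ge0 (expR_partial_sum_le (m - n) (normr_ge0 y))).
rewrite mulr_sumr; apply: ler_sum => i _.
have -> : `|y| ^+ n / n`!%:R * (`|y| ^+ i / i`!%:R) = `|y| ^+ (i + n) / (i`! * n`!)%:R.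
  by rewrite exprD natrM invfM; ring.
rewrite /exp_coeff /= normrM normfV normrX normr_nat.
apply: ler_wpM2l; first by rewrite exprn_ge0.
by rewrite lef_pV2 ?posrE ?ltr0n ?muln_gt0 ?fact_gt0 // ler_nat leq_mul_fact.
Unshelve. all: by end_near.
Qed.

Lemma cosh_le_expR (m : R) : (expR m + expR (- m)) / 2 <= expR (m ^+ 2 / 2).
Proof.
wlog m_ge0 : m / 0 <= m.
  move=> cosh_le; have [/cosh_le //|m_lt0] := leP 0 m.
  by have := cosh_le (- m); rewrite opprK sqrrN addrC oppr_ge0 => ->//; exact: ltW.
set u := fun i => exp_coeff m i + exp_coeff (- m) i.
have uE i : u i = (1 + (-1) ^+ odd i) * (m ^+ i / i`!%:R).
  by rewrite /u /exp_coeff /= [(- m) ^+ i]exprNn signr_odd; ring.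
have u_ge0 i : 0 <= u i.
  rewrite uE mulr_ge0 ?divr_ge0 ?exprn_ge0 //.
  by case: (odd i); rewrite ?expr0 ?expr1; lra.
have sum_u_double k :
    \sum_(0 <= i < k.*2) u i = 2 * \sum_(0 <= j < k) m ^+ j.*2 / j.*2`!%:R.
  elim: k => [|k IHk]; first by rewrite !big_geq // mulr0.
  by rewrite doubleS !big_nat_recr //= IHk !uE /= odd_double /=; ring.
have cv : series u @ \oo --> expR m + expR (- m).
  rewrite (_ : series u = series (exp_coeff m) + series (exp_coeff (- m))).
    exact: cvgD (is_cvg_series_exp_coeff m) (is_cvg_series_exp_coeff (- m)).
  by apply/funext => n; rewrite /series /= !fctE -big_split.
rewrite ler_pdivrMr // mulrC -(cvg_lim _ cv) //.
apply: limr_le; first by apply/cvg_ex; exists (expR m + expR (- m)).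
near=> n; apply: (@le_trans _ _ (series u n.*2)).
  rewrite /series /= [leRHS](@big_cat_nat _ _ _ n) //= ?lerDl ?sumr_ge0 //.
  by rewrite -addnn leq_addr.
have m2_ge0 : 0 <= m ^+ 2 / 2 by rewrite divr_ge0 ?sqr_ge0.
rewrite /series /= sum_u_double; apply: ler_wpM2l => //.
apply: le_trans (expR_partial_sum_le n m2_ge0); apply: ler_sum_nat => j _.
rewrite expr_div_n -exprM mul2n -[_ / j`!%:R]mulrA -invfM -natrX -natrM.
apply: ler_wpM2l; first by rewrite exprn_ge0.
rewrite lef_pV2 ?posrE ?ltr0n ?muln_gt0 ?expn_gt0 ?fact_gt0 //.
by rewrite ler_nat leq_exp2_fact_double.
Unshelve. all: by end_near.
Qed.

Lemma expR1_ge2 : 2 <= expR (1 : R).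
Proof. by have := expR_ge1Dx (1 : R); rewrite [1 + 1]/2. Qed.

Lemma expRN_le_inv (a x : R) : 0 < a -> ln a <= x -> expR (- x) <= a^-1.
Proof. by move=> a_gt0 lna_le; rewrite -(lnK a_gt0) -expRN ler_expR lerN2. Qed.

Fixpoint cheb (n : nat) : {poly R} :=
  match n with
  | 0 => 1
  | 1 => 'X
  | (m.+1 as n').+1 => 2%:P * 'X * cheb n' - cheb m
  end.

Lemma chebSS n : cheb n.+2 = 2%:P * 'X * cheb n.+1 - cheb n.
Proof. by []. Qed.

Lemma size_cheb n : (size (cheb n) <= n.+1)%N.
Proof.
suff: (size (cheb n) <= n.+1)%N /\ (size (cheb n.+1) <= n.+2)%N by case.
elim: n => [|n [IHn IHn1]]; first by rewrite size_poly1 size_polyX.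
split=> //; rewrite chebSS; apply: leq_trans (size_polyD _ _) _.
rewrite size_polyN geq_max (leq_trans IHn) ?andbT; last lia.
have size2X : (size (2%:P * 'X : {poly R})%R <= 2)%N.
  by rewrite mul_polyC (leq_trans (size_scale_leq _ _)) ?size_polyX.
apply: leq_trans (size_polyMleq _ _) _; lia.
Qed.

Lemma cheb_cos n (phi : R) : (cheb n).[cos phi] = cos (n%:R * phi).
Proof.
suff: (cheb n).[cos phi] = cos (n%:R * phi) /\
      (cheb n.+1).[cos phi] = cos (n.+1%:R * phi) by case.
elim: n => [|n [IHn IHn1]]; first by rewrite hornerC hornerX mul0r mul1r cos0.
split=> //; rewrite chebSS !hornerE IHn IHn1.
have -> : n.+2%:R * phi = n.+1%:R * phi + phi by rewrite !mulrS; ring.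
have -> : n%:R * phi = n.+1%:R * phi - phi by rewrite mulrS; ring.
rewrite cosB cosD; ring.
Qed.

Lemma cheb_le1 n (x : R) : -1 <= x <= 1 -> `|(cheb n).[x]| <= 1.
Proof.
move=> x11; rewrite -[x]acosK ?in_itv //= cheb_cos.
by rewrite ler_norml cos_geN1 cos_le1.
Qed.

Lemma cheb_absz_rec (j : int) (x : R) :
  (cheb (absz (j + 1))).[x] + (cheb (absz (j - 1))).[x] =
  2 * x * (cheb (absz j)).[x].
Proof.
have chebE n : (cheb n.+2).[x] + (cheb n).[x] = 2 * x * (cheb n.+1).[x].
  by rewrite chebSS !hornerE; ring.
case: j => [[|n]|n].
- by rewrite /= !hornerE; ring.
- have [-> ->] : (`|(n.+1%:Z + 1)%R| = n.+2 /\ `|(n.+1%:Z - 1)%R| = n)%N by lia.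
  exact: chebE.
- have [-> [-> ->]] :
      (`|(Negz n + 1)%R| = n /\ `|(Negz n - 1)%R| = n.+2 /\ `|Negz n| = n.+1)%N.
    by lia.
  by rewrite addrC chebE.
Qed.

(* [walk_mean s f] is the expectation of [f (S_s)] for the simple random walk
   [S] on the integers started at 0. *)
Fixpoint walk_mean (V : lmodType R) (s : nat) (f : int -> V) : V :=
  if s is s'.+1 then walk_mean s' (fun j => 2^-1 *: (f (j + 1) + f (j - 1)))
  else f 0.

Section WalkMeanLinear.
Variable V : lmodType R.
Implicit Types f g : int -> V.

Lemma walk_meanD s f g :
  walk_mean s (fun j => f j + g j) = walk_mean s f + walk_mean s g.
Proof.
elim: s f g => [//|s IHs] f g /=; rewrite -IHs.
by congr walk_mean; apply/funext => j; rewrite -scalerDr addrACA.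
Qed.

Lemma walk_meanZ s (a : R) f : walk_mean s (fun j => a *: f j) = a *: walk_mean s f.
Proof.
elim: s f => [//|s IHs] f /=; rewrite -IHs.
by congr walk_mean; apply/funext => j; rewrite -scalerDr !scalerA mulrC.
Qed.

Lemma walk_mean_eigen s (c : R) f :
  (forall j, f (j + 1) + f (j - 1) = (2 * c) *: f j) ->
  walk_mean s f = c ^+ s *: f 0.
Proof.
move=> f_eigen; elim: s => [|s IHs] /=; first by rewrite scale1r.
rewrite (_ : (fun j => _) = fun j => c *: f j); last first.
  by apply/funext => j; rewrite f_eigen scalerA mulrA mulVf ?mul1r ?pnatr_eq0.
by rewrite walk_meanZ IHs scalerA -exprS.
Qed.

Lemma linear_walk_mean (W : lmodType R) (L : {linear V -> W}) s f :
  L (walk_mean s f) = walk_mean s (L \o f).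
Proof.
elim: s f => [//|s IHs] f /=; rewrite IHs.
by congr walk_mean; apply/funext => j; rewrite /= linearZ linearD.
Qed.

End WalkMeanLinear.

Lemma size_walk_mean (n s : nat) (f : int -> {poly R}) :
  (forall j, (size (f j) <= n)%N) -> (size (walk_mean s f) <= n)%N.
Proof.
elim: s f => [|s IHs] f size_f /=; first exact: size_f.
apply: IHs => j; apply: leq_trans (size_scale_leq _ _) _.
by apply: leq_trans (size_polyD _ _) _; rewrite geq_max !size_f.
Qed.

Lemma ler_walk_mean s (f g : int -> R) :
  (forall j, f j <= g j) -> walk_mean s f <= walk_mean s g.
Proof.
elim: s f g => [|s IHs] f g le_fg /=; first exact: le_fg.
by apply: IHs => j; rewrite ler_wpM2l ?invr_ge0 // lerD.
Qed.

Lemma ler_norm_walk_mean s (f : int -> R) :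
  `|walk_mean s f| <= walk_mean s (fun j => `|f j|).
Proof.
elim: s f => [//|s IHs] f /=; apply: le_trans (IHs _) (ler_walk_mean _ _) => j.
by rewrite normrZ ger0_norm ?invr_ge0 // ler_wpM2l ?invr_ge0 // ler_normD.
Qed.

Lemma walk_mean_tail (d s : nat) : (0 < s)%N ->
  walk_mean s (fun j => (d < `|j|)%N%:R : R) <=
  2 * expR (- (d%:R ^+ 2 / (2 * s%:R))).
Proof.
move=> s_gt0; set mu : R := d%:R / s%:R.
have mu_ge0 : 0 <= mu by rewrite divr_ge0.
set cosh := fun j : int => expR (mu * j%:~R) + expR (- (mu * j%:~R)).
have tail_le j : (d < `|j|)%N%:R <= expR (- (mu * d%:R)) * cosh j.
  case: ltnP => [d_lt_j|_]; last by rewrite mulr_ge0 ?addr_ge0 ?expR_ge0.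
  have d_le_j : d%:R <= `|j%:~R : R| by rewrite -intr_norm -natr_absz ler_nat ltnW.
  apply: (@le_trans _ _ (expR (- (mu * d%:R)) * expR (mu * `|j%:~R|))).
    rewrite -expRD; apply: le_trans (expR_ge1Dx _).
    by rewrite lerDl addrC subr_ge0 ler_wpM2l.
  apply: ler_wpM2l; first exact: expR_ge0.
  have [j_ge0|j_lt0] := leP 0 (j%:~R : R).
    by rewrite ger0_norm // lerDl expR_ge0.
  by rewrite ltr0_norm // mulrN lerDr expR_ge0.
set c := (expR mu + expR (- mu)) / 2.
have cosh_eigen j : cosh (j + 1) + cosh (j - 1) = (2 * c) *: cosh j.
  rewrite -[_ *: _]/(2 * c * cosh j) /cosh /c intrD intrB !mulrDr !mulrN !opprD.
  by rewrite !expRD mulr1 opprK; field.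
have c_le : c ^+ s <= expR (s%:R * (mu ^+ 2 / 2)).
  rewrite expRM_natl; apply: lerXn2r; last exact: cosh_le_expR.
    by rewrite nnegrE divr_ge0 ?addr_ge0 ?expR_ge0.
  by rewrite nnegrE expR_ge0.
apply: le_trans (ler_walk_mean s tail_le) _.
rewrite (walk_meanZ s _ cosh) (walk_mean_eigen _ cosh_eigen) /cosh mulr0 oppr0 expR0.
have -> : - (d%:R ^+ 2 / (2 * s%:R)) = - (mu * d%:R) + s%:R * (mu ^+ 2 / 2).
  by rewrite /mu; field; rewrite pnatr_eq0 -lt0n.
rewrite -[leLHS]/(expR (- (mu * d%:R)) * (c ^+ s * 2)) [c ^+ s * 2]mulrC mulrCA.
by rewrite expRD !ler_pM2l ?expR_gt0.
Qed.

Definition pow_approx (d s : nat) : {poly R} :=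
  walk_mean s (fun j => if (`|j| <= d)%N then cheb (absz j) else 0).

Lemma size_pow_approx d s : (size (pow_approx d s) <= d.+1)%N.
Proof.
apply: size_walk_mean => j; case: ifP => [j_le_d|_]; last by rewrite size_poly0.
exact: leq_trans (size_cheb _) _.
Qed.

Lemma pow_approx_err d s (x : R) : (0 < s)%N -> -1 <= x <= 1 ->
  `|x ^+ s - (pow_approx d s).[x]| <= 2 * expR (- (d%:R ^+ 2 / (2 * s%:R))).
Proof.
move=> s_gt0 x11.
set T := fun j : int => (cheb (absz j)).[x].
have powE : x ^+ s = walk_mean s T.
  rewrite (@walk_mean_eigen _ s x T) => [|j].
    by rewrite /T hornerC -[RHS]/(x ^+ s * 1) mulr1.
  by rewrite -[_ *: _]/(2 * x * T j); exact: cheb_absz_rec.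
have splitT : T = fun j =>
    (if (`|j| <= d)%N then cheb (absz j) else 0).[x] + (d < `|j|)%N%:R * T j.
  apply/funext => j; rewrite /T.
  by case: leqP; rewrite ?horner0 ?mul0r ?mul1r ?addr0 ?add0r.
rewrite powE {1}splitT walk_meanD /pow_approx -horner_evalE linear_walk_mean.
rewrite /comp /horner_eval /= addrAC subrr add0r.
apply: le_trans (ler_norm_walk_mean s _) _.
apply: le_trans (walk_mean_tail d s_gt0); apply: ler_walk_mean => j.
by rewrite normrM ger0_norm // ler_piMr // cheb_le1.
Qed.

Lemma pow_approx_err_small d i (x delta : R) : 0 < delta ->
  2 * i%:R * ln (4 / delta) <= d%:R ^+ 2 -> -1 <= x <= 1 ->
  `|x ^+ i - (pow_approx d i).[x]| <= delta / 2.
Proof.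
move=> delta_gt0 d_ge x11; case: i d_ge => [_|i d_ge].
  by rewrite /pow_approx /= hornerC expr0 subrr normr0 divr_ge0 ?ltW.
apply: le_trans (pow_approx_err d (ltn0Sn i) x11) _.
have -> : delta / 2 = 2 * (4 / delta)^-1 by rewrite invf_div; field.
rewrite ler_pM2l // expRN_le_inv ?divr_gt0 // ler_pdivlMr ?mulr_gt0 //.
by rewrite mulrC.
Qed.

Lemma pow_div_fact_le (lam : R) (N : nat) :
  0 <= lam -> lam * expR 1 ^+ 2 <= N%:R ->
  lam ^+ N.+1 / N.+1`!%:R <= expR (- N%:R - 2).
Proof.
move=> lam_ge0 lamN.
have := @expR_ge1Dxn R (lam * expR 1 ^+ 2) N.
rewrite mulr_ge0 ?exprn_ge0 ?expR_ge0 // => /(_ isT) taylor.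
have e2n : expR 1 ^+ 2 ^+ N.+1 = expR (2 * N.+1)%:R :> R.
  by rewrite -exprM -expRM_natr mul1r.
have -> : - N%:R - 2 = N%:R - (2 * N.+1)%:R :> R.
  by rewrite natrM -addn1 natrD; ring.
rewrite expRB ler_pdivlMr ?expR_gt0 //.
apply: le_trans (_ : _ <= expR (lam * expR 1 ^+ 2)) _; last by rewrite ler_expR.
by apply: le_trans taylor; rewrite exprMn e2n mulrAC lerDr.
Qed.

Lemma expR_taylor_err_small (lam y delta : R) (N : nat) :
  `|y| <= lam -> 0 < delta ->
  lam * expR 1 ^+ 2 <= N%:R -> ln (2 / delta) <= N%:R ->
  expR (- lam) * `|expR y - \sum_(0 <= i < N.+1) y ^+ i / i`!%:R| <= delta / 8.
Proof.
move=> y_le delta_gt0 lamN lnN.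
have lam_ge0 : 0 <= lam := le_trans (normr_ge0 y) y_le.
apply: (@le_trans _ _ (lam ^+ N.+1 / N.+1`!%:R)).
  apply: le_trans (ler_wpM2l (expR_ge0 _) (expR_taylor_err y N.+1)) _.
  have A_ge0 : 0 <= `|y| ^+ N.+1 / N.+1`!%:R by rewrite divr_ge0 ?exprn_ge0.
  rewrite mulrCA -expRD.
  apply: le_trans (ler_wpM2l A_ge0 (_ : expR (- lam + `|y|) <= 1)) _.
    by rewrite expR_le1; lra.
  rewrite mulr1; apply: ler_wpM2r; first by rewrite invr_ge0.
  by apply: lerXn2r; rewrite ?nnegrE.
apply: le_trans (pow_div_fact_le lam_ge0 lamN) _.
have eN : expR (- N%:R) <= delta / 2.
  by rewrite -invf_div expRN_le_inv ?divr_gt0.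
have e2 : expR (-2) <= 4^-1 :> R.
  rewrite expRN lef_pV2 ?posrE ?expR_gt0 // -[2 : R]/(1 + 1) expRD.
  by have := expR1_ge2; nra.
rewrite expRD; have := expR_ge0 (- N%:R : R); have := expR_ge0 (-2 : R); nra.
Qed.

Definition exp_approx (lam : R) (N d : nat) : {poly R} :=
  \sum_(0 <= i < N.+1) (expR (- lam) * (lam ^+ i / i`!%:R)) *: pow_approx d i.

Lemma size_exp_approx lam N d : (size (exp_approx lam N d) <= d.+1)%N.
Proof.
apply: (big_ind (fun p : {poly R} => size p <= d.+1)%N); first by rewrite size_poly0.
  by move=> p q sp sq; apply: leq_trans (size_polyD _ _) _; rewrite geq_max sp sq.
by move=> i _; apply: leq_trans (size_scale_leq _ _) (size_pow_approx _ _).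
Qed.

Lemma exp_approx_err (lam delta x : R) (N d : nat) :
  0 <= lam -> 0 < delta -> delta <= 4 ->
  lam * expR 1 ^+ 2 <= N%:R -> ln (2 / delta) <= N%:R ->
  2 * N%:R * ln (4 / delta) <= d%:R ^+ 2 -> -1 <= x <= 1 ->
  `|expR (lam * (x - 1)) - (exp_approx lam N d).[x]| <= delta * 5 / 8.
Proof.
move=> lam_ge0 delta_gt0 delta_le4 lamN lnN dN x11.
set c := fun i => expR (- lam) * (lam ^+ i / i`!%:R).
have c_ge0 i : 0 <= c i by rewrite mulr_ge0 ?expR_ge0 ?divr_ge0 ?exprn_ge0.
have sum_c_le1 : \sum_(0 <= i < N.+1) c i <= 1.
  rewrite -mulr_sumr -[leRHS](expRxMexpNx_1 lam) [leRHS]mulrC ler_pM2l ?expR_gt0 //.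
  exact: expR_partial_sum_le.
have errE : expR (lam * (x - 1)) - (exp_approx lam N d).[x] =
    expR (- lam) * (expR (lam * x) - \sum_(0 <= i < N.+1) (lam * x) ^+ i / i`!%:R)
    + \sum_(0 <= i < N.+1) c i * (x ^+ i - (pow_approx d i).[x]).
  have taylorE : expR (- lam) * \sum_(0 <= i < N.+1) (lam * x) ^+ i / i`!%:R =
      \sum_(0 <= i < N.+1) c i * x ^+ i.
    by rewrite mulr_sumr; apply: eq_bigr => i _; rewrite /c exprMn; ring.
  have -> : expR (lam * (x - 1)) = expR (- lam) * expR (lam * x).
    by rewrite -expRD; congr expR; ring.
  rewrite /exp_approx horner_sum; under eq_bigr do rewrite hornerZ.
  under [X in _ = _ + X]eq_bigr do rewrite mulrBr.
  by rewrite sumrB mulrBr taylorE /c; ring.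
rewrite errE; apply: le_trans (ler_normD _ _) _.
have taylor_err : `|expR (- lam) * (expR (lam * x) -
    \sum_(0 <= i < N.+1) (lam * x) ^+ i / i`!%:R)| <= delta / 8.
  rewrite normrM gtr0_norm ?expR_gt0 //; apply: expR_taylor_err_small => //.
  by rewrite normrM ger0_norm // ler_piMr // ler_norml.
have ln4_ge0 : 0 <= ln (4 / delta) by rewrite ln_ge0 // ler_pdivlMr // mul1r.
have cheb_err :
    `|\sum_(0 <= i < N.+1) c i * (x ^+ i - (pow_approx d i).[x])| <= delta / 2.
  apply: le_trans (ler_norm_sum _ _ _) _.
  apply: (@le_trans _ _ (\sum_(0 <= i < N.+1) c i * (delta / 2))); last first.
    by rewrite -mulr_suml; apply: ler_piMl => //; lra.
  apply: ler_sum_nat => i /andP[_ iN]; rewrite normrM ger0_norm //.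
  apply: ler_wpM2l => //; apply: pow_approx_err_small => //; apply: le_trans dN.
  by rewrite ler_wpM2r // ler_wpM2l // ler_nat -ltnS.
lra.
Qed.

Lemma expRN_poly_approx (b delta : R) (N d : nat) :
  0 < b -> 0 < delta -> delta <= 4 ->
  b * expR 1 ^+ 2 / 2 <= N%:R -> ln (2 / delta) <= N%:R ->
  2 * N%:R * ln (4 / delta) <= d%:R ^+ 2 ->
  exists2 Q : {poly R}, (size Q <= d.+1)%N &
    forall t, 0 <= t <= b -> `|expR (- t) - Q.[t]| <= delta * 5 / 8.
Proof.
move=> b_gt0 delta_gt0 delta_le4 bN lnN dN.
set y : {poly R} := 1 - (2 / b) *: 'X.
have size_y : (size y <= 2)%N.
  apply: leq_trans (size_polyD _ _) _; rewrite size_polyN size_poly1 geq_max /=.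
  by rewrite (leq_trans (size_scale_leq _ _)) ?size_polyX.
exists (exp_approx (b / 2) N d \Po y).
  apply: leq_trans (size_comp_poly_leq _ _) _.
  by have := size_exp_approx (b / 2) N d; nia.
move=> t /andP[t_ge0 t_le_b].
have yE : y.[t] = 1 - 2 * t / b by rewrite /y !hornerE mulrAC.
rewrite horner_comp (_ : - t = b / 2 * (y.[t] - 1)); last first.
  by rewrite yE; field; exact: lt0r_neq0.
apply: exp_approx_err => //; first by rewrite divr_ge0 ?ltW.
  by rewrite mulrAC.
have /andP[tb_ge0 tb_le1] : 0 <= t / b <= 1.
  by rewrite ler_pdivrMr // mul1r t_le_b andbT divr_ge0 // ltW.
by rewrite yE -mulrA; apply/andP; split; lra.
Qed.

Lemma poly_approx_size_eq (f : R -> R) (b eps delta : R) (d : nat) (p : {poly R}) :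
  eps < delta -> (size p <= d.+1)%N ->
  (forall t, 0 <= t <= b -> `|f t - p.[t]| <= eps) ->
  exists2 q : {poly R}, size q = d.+1 &
    forall t, 0 <= t <= b -> `|f t - q.[t]| <= delta.
Proof.
move=> eps_lt size_p p_err.
have size_eq (q : {poly R}) : (size q <= d.+1)%N -> q`_d != 0 -> size q = d.+1.
  move=> size_q qd_neq0; apply/eqP; rewrite eqn_leq size_q ltnNge.
  by apply: contra qd_neq0 => /leq_sizeP ->.
have [pd_eq0|pd_neq0] := eqVneq p`_d 0; last first.
  by exists p => [|t /p_err /le_trans]; [exact: size_eq | apply; exact: ltW].
set eta := (delta - eps) / (1 + `|b| ^+ d).
have bd_gt0 : 0 < 1 + `|b| ^+ d by rewrite ltr_pwDl ?exprn_ge0.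
have eta_gt0 : 0 < eta by rewrite divr_gt0 ?subr_gt0.
exists (p + eta *: 'X^d).
  apply: size_eq; last by rewrite coefD coefZ coefXn eqxx pd_eq0 add0r mulr1 gt_eqF.
  apply: leq_trans (size_polyD _ _) _; rewrite geq_max size_p.
  by rewrite (leq_trans (size_scale_leq _ _)) ?size_polyXn.
move=> t /[dup] /andP[t_ge0 t_le_b] /p_err err_t.
have /andP[eta_t_ge0 eta_t_le] : 0 <= eta * t ^+ d <= delta - eps.
  rewrite mulr_ge0 ?exprn_ge0 ?(ltW eta_gt0) //=.
  apply: (@le_trans _ _ (eta * (1 + `|b| ^+ d))); last by rewrite divfK ?lt0r_neq0.
  have : t ^+ d <= `|b| ^+ d.
    by apply: lerXn2r; rewrite ?nnegrE // (le_trans t_le_b (ler_norm b)).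
  rewrite ler_pM2l //; lra.
rewrite hornerD hornerZ hornerXn opprD addrA.
apply: le_trans (ler_normB _ _) _; rewrite [`|eta * _|]ger0_norm //; lra.
Qed.

Lemma normr_sqrB_le (a s e : R) : 0 <= a <= 1 -> `|a - s| <= e ->
  `|a ^+ 2 - s ^+ 2| <= 2 * e + e ^+ 2.
Proof.
move=> /andP[a_ge0 a_le1] as_le.
have -> : a ^+ 2 - s ^+ 2 = (a - s) * (2 * a - (a - s)) by ring.
have le_2e : `|2 * a - (a - s)| <= 2 + e.
  apply: le_trans (ler_normB _ _) _.
  by rewrite normrM normr_nat (ger0_norm a_ge0); lra.
rewrite normrM (_ : 2 * e + e ^+ 2 = e * (2 + e)); last by ring.
exact: ler_pM as_le le_2e.
Qed.

Lemma theta_natE (b delta : R) : 0 < b -> exists N : nat, theta b delta = N%:R.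
Proof.
move=> b_gt0; rewrite /theta; set M := Num.max _ _.
have M_gt0 : 0 < M by rewrite lt_max divr_gt0 ?mulr_gt0 ?exprn_gt0 ?expR_gt0.
exists `|Num.ceil M|%N; rewrite natr_absz ger0_norm // ceil_ge0.
by rewrite (lt_trans _ M_gt0) ?ltrN10.
Qed.

Lemma theta_ge (b delta : R) :
  b * expR 1 ^+ 2 / 2 <= theta b delta /\ ln (2 / delta) <= theta b delta.
Proof. by apply/andP; rewrite -ge_max; exact: ceil_ge. Qed.

Lemma sdeg_sqr_ge (b delta : R) : 0 < b -> 0 < delta -> delta <= 4 ->
  2 * theta b delta * ln (4 / delta) <= (sdeg b delta)%:R ^+ 2.
Proof.
move=> b_gt0 delta_gt0 delta_le4.
have theta_ge0 : 0 <= theta b delta.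
  by apply: le_trans (theta_ge b delta).1; rewrite !mulr_ge0 ?exprn_ge0 ?expR_ge0 ?ltW.
set q := 2 * theta b delta * ln (4 / delta).
have q_ge0 : 0 <= q by rewrite !mulr_ge0 // ln_ge0 // ler_pdivlMr // mul1r.
have sqrt_le : Num.sqrt q <= (sdeg b delta)%:R.
  rewrite /sdeg -/q natr_absz ger0_norm ?ceil_ge // ceil_ge0.
  exact: lt_le_trans (ltrN10 R) (sqrtr_ge0 q).
by rewrite -(sqr_sqrtr q_ge0); apply: lerXn2r; rewrite ?nnegrE ?sqrtr_ge0 ?ler0n.
Qed.

End ExpPolyApprox.

Theorem corollary5 (R : realType) (b delta : R) :
  0 < b -> 0 < delta < 1 ->
  exists s : {poly R},
    size s = (sdeg b delta).+1 /\
    forall t : R, 0 <= t <= b ->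
      `|expR (-2 * t) - s.[t] ^+ 2| <= 2 * delta + delta ^+ 2 /\
      2 * delta + delta ^+ 2 <= 3 * delta.
Proof.
move=> b_gt0 /andP[delta_gt0 delta_lt1].
have delta_le4 : delta <= 4 by lra.
have dN := sdeg_sqr_ge b_gt0 delta_gt0 delta_le4.
have [N thetaE] := theta_natE delta b_gt0.
have [bN lnN] := theta_ge b delta; rewrite thetaE in bN lnN dN.
have [Q sizeQ errQ] := expRN_poly_approx b_gt0 delta_gt0 delta_le4 bN lnN dN.
have err_lt : delta * 5 / 8 < delta by lra.
have [s sizes errs] := poly_approx_size_eq err_lt sizeQ errQ.
exists s; split=> // t /[dup] t_in /andP[t_ge0 _]; split.
- rewrite (_ : -2 * t = 2%:R * - t) ?expRM_natl; last by ring.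
  apply: normr_sqrB_le (errs t t_in).
  by rewrite expR_ge0 expR_le1 oppr_le0.
- have : delta ^+ 2 <= delta by rewrite expr2; apply: ler_piMl; lra.
  lra.
Qed.
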